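(* Let $(x_0,y_0)$ be a pair of integers satisfying $S_{2,1}$. Let $y_{-1}$ and $x_1$ be the real numbers defined by $y_{-1}y_0=x_0^3+x_0+1$ and $x_0x_1=y_0^3+y_0^2+1$. Then $y_{-1},x_1$ are integers, $(y_{-1},x_0)$ satisfies $S_{1,1}$, and $(y_0,x_1)$ satisfies $S_{2,2}$.
   Context: For $\lambda_a,\lambda_b\in\{1,2\}$, a pair of integers $(x,y)$ satisfies the system $S_{\lambda_a,\lambda_b}$ if $x\mid y^3+y^{\lambda_a}+1$ and $y\mid x^3+x^{\lambda_b}+1$. So $S_{1,1}$: $x\mid y^3+y+1,\ y\mid x^3+x+1$; $S_{2,1}$: $x\mid y^3+y^2+1,\ y\mid x^3+x+1$; $S_{2,2}$: $x\mid y^3+y^2+1,\ y\mid x^3+x^2+1$. *)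

From Stdlib Require Import ZArith Reals.

Definition S (la lb : Z) (x y : Z) : Prop :=
  (x | y ^ 3 + y ^ la + 1)%Z /\ (y | x ^ 3 + x ^ lb + 1)%Z.

(* From y0 y_{-1} = x0^3 + x0 + 1 we get y_{-1} y0 = 1 (mod x0), so y0 is
   invertible modulo x0 with inverse y_{-1}; multiplying x0 | y0^3 + y0^2 + 1 by y_{-1}^3
   turns it into x0 | 1 + y_{-1}^2 + y_{-1}^3, the reciprocal cubic.  Symmetrically
   x1 x0 = 1 (mod y0) turns y0 | x0^3 + x0 + 1 into y0 | 1 + x1^2 + x1^3.  Integrality of
   y_{-1} and x1 holds because the cubics x^3 + x + 1 and y^3 + y^2 + 1 have no integer
   roots, so y0 and x0 are nonzero. *)
From Stdlib Require Import ZArith Reals Lia Znumtheory.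
Open Scope Z_scope.

Lemma Z_divide_sub_one_pow_sub_one (u n : Z) : 0 <= n -> (u - 1 | u ^ n - 1).
Proof.
  revert n; apply natlike_ind.
  - exists 0; ring.
  - intros n Hn [k Hk].
    exists (u * k + 1).
    rewrite Z.pow_succ_r by exact Hn.
    replace (u * u ^ n - 1) with (u * (u ^ n - 1) + (u - 1)) by ring.
    rewrite Hk; ring.
Qed.

Lemma Z_gcd_1_of_divide_mul_sub_one (x a y : Z) : (x | a * y - 1) -> Z.gcd x y = 1.
Proof.
  intros [k Hk].
  apply Zgcd_1_rel_prime, bezout_rel_prime.
  apply (Bezout_intro _ _ _ (- k) a); lia.
Qed.

Lemma divide_reciprocal_cubic (x y a e f : Z) :
  0 <= e -> 0 <= f -> e + f = 3 ->
  (x | a * y - 1) -> (x | y ^ 3 + y ^ f + 1) -> (x | a ^ 3 + a ^ e + 1).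
Proof.
  intros He Hf Hef Hinv Hdiv.
  assert (Hpow : forall n, 0 <= n -> (x | (a * y) ^ n - 1)).
  { intros n Hn.
    apply (Z.divide_trans _ (a * y - 1)); [exact Hinv|].
    now apply Z_divide_sub_one_pow_sub_one. }
  apply (Z.gauss _ (y ^ 3)).
  - assert (Hsplit : y ^ 3 * (a ^ 3 + a ^ e + 1)
                  = ((a * y) ^ 3 - 1) + ((a * y) ^ e - 1) * y ^ f + (y ^ 3 + y ^ f + 1)).
    { rewrite !Z.pow_mul_l.
      replace (y ^ 3) with (y ^ e * y ^ f) by (rewrite <- Z.pow_add_r; f_equal; lia).
      ring. }
    rewrite Hsplit.
    apply Z.divide_add_r; [apply Z.divide_add_r|exact Hdiv].
    + apply Hpow; lia.
    + now apply Z.divide_mul_l, Hpow.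
  - apply (Z_gcd_1_of_divide_mul_sub_one _ (a ^ 3)).
    rewrite <- Z.pow_mul_l; apply Hpow; lia.
Qed.

Lemma cubic_no_integer_root (x e : Z) : 1 <= e <= 2 -> x ^ 3 + x ^ e + 1 <> 0.
Proof.
  intros He Hroot.
  assert (Hunit : (x | 1)).
  { exists (- (x ^ 2 + x ^ (e - 1))).
    replace (x ^ e) with (x ^ (e - 1) * x) in Hroot
      by (rewrite Z.mul_comm, <- Z.pow_succ_r by lia; f_equal; lia).
    replace (x ^ 3) with (x ^ 2 * x) in Hroot by ring.
    lia. }
  assert (e = 1 \/ e = 2) as [-> | ->] by lia;
    destruct (Z.divide_1_r _ Hunit) as [-> | ->]; discriminate.
Qed.

Lemma IZR_eq_of_mul_IZR (r : R) (d k n : Z) :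
  n <> 0 -> n = k * d -> (r * IZR d)%R = IZR n -> r = IZR k.
Proof.
  intros Hn Hnkd Hr.
  assert (Hd : IZR d <> 0%R) by (apply not_0_IZR; intros ->; lia).
  apply (Rmult_eq_reg_r (IZR d)); [|exact Hd].
  now rewrite Hr, Hnkd, mult_IZR.
Qed.

Theorem corollary3 (x0 y0 : Z) (ym1 x1 : R) :
  S 2 1 x0 y0 ->
  (ym1 * IZR y0 = IZR (x0 ^ 3 + x0 + 1))%R ->
  (IZR x0 * x1 = IZR (y0 ^ 3 + y0 ^ 2 + 1))%R ->
  exists a b : Z, ym1 = IZR a /\ x1 = IZR b /\ S 1 1 a x0 /\ S 2 2 y0 b.
Proof.
  intros [[b Hb] [a Ha]] Eym1 Ex1.
  pose proof (cubic_no_integer_root x0 1 ltac:(lia)) as Hx0cubic.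
  pose proof (cubic_no_integer_root y0 2 ltac:(lia)) as Hy0cubic.
  rewrite Z.pow_1_r in Ha, Hx0cubic.
  rewrite Rmult_comm in Ex1.
  exists a, b; split; [|split; [|split]].
  - exact (IZR_eq_of_mul_IZR _ _ _ _ Hx0cubic Ha Eym1).
  - exact (IZR_eq_of_mul_IZR _ _ _ _ Hy0cubic Hb Ex1).
  - split.
    + exists y0; rewrite Z.pow_1_r; lia.
    + apply (divide_reciprocal_cubic x0 y0 a 1 2); try lia.
      * exists (x0 ^ 2 + 1); rewrite <- Ha; ring.
      * now exists b.
  - split.
    + apply (divide_reciprocal_cubic y0 x0 b 2 1); try lia.
      * exists (y0 ^ 2 + y0); rewrite <- Hb; ring.
      * exists a; rewrite Z.pow_1_r; exact Ha.
    + exists x0; rewrite Hb; ring.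
Qed.
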